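(* Let $\mathcal{S}$ be an addable abstract numeration system and let $Y\subseteq\mathbb{N}^{\mathbb{N}}$ be a subshift (over a finite subset of $\mathbb{N}$) that is $\mathcal{S}$-codable. Then its hereditary closure $\tilde Y=\{\mathbf{x}\in\mathbb{N}^{\mathbb{N}}:\exists\mathbf{y}\in Y\ \forall i\ x_i\le y_i\}$ is $\mathcal{S}$-codable.
   Context: ANS: $\mathcal{S}=(L,\prec)$ with $L$ an infinite language and $\prec$ a total order of type $\omega$; $\mathrm{rep}(n)$ is the $n$-th word of $L$; tuples are represented by left-padding with a new symbol $\#$; $Z\subseteq\mathbb{N}^d$ is $\mathcal{S}$-recognizable if $\mathrm{rep}(Z)$ is regular; $\mathcal{S}$ is addable if $\{(x,y,x+y)\}$ is $\mathcal{S}$-recognizable. For $\mathbf{y}\in\mathbb{N}^{\mathbb{N}}$: $\sum\mathbf{y}=\sum_iy_i$; if finite, $\nu(\mathbf{y})$ is the unique nondecreasing $(n_1,\dots,n_d)$ with $y_j=|\{k:n_k=j\}|$. Coding dimension of $Z\subseteq\mathbb{N}^{\mathbb{N}}$: least $d$ bounding $\sum\mathbf{y}$ on $Z$, if it exists. $Z$ is weakly $\mathcal{S}$-codable if for every $k$, $\{\nu(\mathbf{y}):\mathbf{y}\in Z,\sum\mathbf{y}\le k\}$ is $\mathcal{S}$-recognizable in each dimension; $\mathcal{S}$-codable if moreover the coding dimension is finite. *)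

From mathcomp Require Import all_boot.
Set Implicit Arguments. Unset Strict Implicit. Unset Printing Implicit Defensive.

Record dfa (A : finType) := Dfa {
  dstate : finType;
  dstart : dstate;
  dfinal : pred dstate;
  dtrans : dstate -> A -> dstate }.

Definition dfa_accepts (A : finType) (M : dfa A) (w : seq A) : bool :=
  @dfinal A M (foldl (@dtrans A M) (@dstart A M) w).

Definition regular (A : finType) (L : seq A -> Prop) : Prop :=
  exists M : dfa A, forall w, L w <-> dfa_accepts M w.

(* S = (L, prec): L a language over a finite alphabet, prec a (strict) total
   order on L of type omega; rep n is the n-th word of L, i.e. rep is an
   order isomorphism from (nat, <) onto (L, prec). *)
Record ANS := MkANS {
  ans_alph : finType;
  ans_lang : seq ans_alph -> Prop;
  ans_ord : seq ans_alph -> seq ans_alph -> Prop;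
  ans_rep : nat -> seq ans_alph;
  ans_rep_lang : forall n, ans_lang (ans_rep n);
  ans_rep_onto : forall w, ans_lang w -> exists n, ans_rep n = w;
  ans_rep_ord : forall m n, ans_ord (ans_rep m) (ans_rep n) <-> m < n }.

(* representation of a d-tuple s (a seq nat of size d): left-pad every
   component rep (s_i) with the new symbol # (= None) up to the maximal
   length, and read the tuple of words as a word over (Sigma u {#})^d. *)
Definition rep_tuple (S : ANS) (d : nat) (s : seq nat)
  : seq {ffun 'I_d -> option (ans_alph S)} :=
  let ws := fun i : 'I_d => ans_rep S (nth 0 s i) in
  let m := \max_(i < d) size (ws i) in
  let padded := fun i : 'I_d =>
    nseq (m - size (ws i)) None ++ map Some (ws i) in
  mkseq (fun j => [ffun i => nth None (padded i) j]) m.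

Definition recognizable (S : ANS) (d : nat) (Z : seq nat -> Prop) : Prop :=
  regular (fun w => exists s, [/\ Z s, size s = d & w = rep_tuple S d s]).

Definition addable (S : ANS) : Prop :=
  recognizable S 3 (fun s => exists x y, s = [:: x; y; x + y]).

Definition sum_le (y : nat -> nat) (k : nat) : Prop :=
  forall n, \sum_(i < n) y i <= k.

(* nu_rel y s : s is nu(y), the nondecreasing tuple with y_j = #{k : s_k = j} *)
Definition nu_rel (y : nat -> nat) (s : seq nat) : Prop :=
  sorted leq s /\ forall j, count_mem j s = y j.

Definition weakly_codable (S : ANS) (Z : (nat -> nat) -> Prop) : Prop :=
  forall k d, recognizable S d
    (fun s => exists y, [/\ Z y, sum_le y k & nu_rel y s]).

Definition codable (S : ANS) (Z : (nat -> nat) -> Prop) : Prop :=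
  weakly_codable S Z /\ exists d, forall y, Z y -> sum_le y d.

(* subshift over a finite subset A of N: values in A, shift-invariant,
   and closed in the product topology. *)
Definition subshift (Y : (nat -> nat) -> Prop) : Prop :=
  exists A : seq nat,
  [/\ forall y, Y y -> forall i, y i \in A,
      forall y, Y y -> Y (fun i => y i.+1)
    & forall x, (forall n, exists y, Y y /\ forall i, i < n -> x i = y i) -> Y x].

Definition hered_closure (Y : (nat -> nat) -> Prop) : (nat -> nat) -> Prop :=
  fun x => exists y, Y y /\ forall i, x i <= y i.

From mathcomp Require Import all_boot zify.
From Stdlib Require Import Classical ClassicalEpsilon.

(* Let D bound the sums of the elements of Y.  If x <= y pointwise with y in Y
   and s = nu(x), t = nu(y), then s is a subsequence of t, i.e. s = mask m t
   for a bit sequence m of length |t| <= D; conversely every mask of nu(y) is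
   nu(x) for some x <= y.  Hence the d-dimensional codes of tilde-Y form a
   finite union, over e <= D and m of length e, of the images of the
   e-dimensional codes of Y under t |-> mask m t.  Each such image is
   S-recognizable: on representations, selecting coordinates is a
   letter-to-letter morphism on columns followed by the removal of the
   leading all-# columns, and both operations preserve regularity. *)

Set Implicit Arguments. Unset Strict Implicit. Unset Printing Implicit Defensive.

(* Classically, every predicate on a finite type is the membership predicate
   of a finite set; this lets automata be described by Prop-valued data. *)
Definition set_of (T : finType) (P : T -> Prop) : {set T} :=
  [set x | is_left (excluded_middle_informative (P x))].

Lemma in_set_of (T : finType) (P : T -> Prop) x : x \in set_of P <-> P x.
Proof. by rewrite inE; case: excluded_middle_informative. Qed.

Record nfa (A : finType) := Nfa {
  nstate : finType;
  ninit : nstate -> Prop;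
  nfinal : nstate -> Prop;
  ntrans : nstate -> A -> nstate -> Prop }.

Fixpoint nreach (A : finType) (N : nfa A) (q : nstate N) (w : seq A)
    (q' : nstate N) : Prop :=
  if w is a :: w' then exists2 q1, ntrans q a q1 & nreach q1 w' q' else q = q'.

Definition nfa_accepts (A : finType) (N : nfa A) (w : seq A) : Prop :=
  exists q0 q : nstate N, [/\ ninit q0, nreach q0 w q & nfinal q].

Lemma regular_ext {A : finType} (L1 L2 : seq A -> Prop) :
  (forall w, L1 w <-> L2 w) -> regular L1 -> regular L2.
Proof. by move=> E [M HM]; exists M => w; rewrite -E. Qed.

Lemma regular_empty {A : finType} : regular (fun _ : seq A => False).
Proof. by exists (@Dfa A unit tt pred0 (fun _ _ => tt)). Qed.

Lemma regular_pair {A : finType} (M1 M2 : dfa A) (f : bool -> bool -> bool) :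
  regular (fun w => f (dfa_accepts M1 w) (dfa_accepts M2 w)).
Proof.
pose M := @Dfa A (dstate M1 * dstate M2)%type (dstart M1, dstart M2)
  (fun q => f (dfinal q.1) (dfinal q.2)) (fun q a => (dtrans q.1 a, dtrans q.2 a)).
have run w q : foldl (@dtrans A M) q w =
    (foldl (@dtrans A M1) q.1 w, foldl (@dtrans A M2) q.2 w).
  by elim: w q => [|a w IH] [q1 q2] //=; rewrite IH.
by exists M => w; rewrite /dfa_accepts run.
Qed.

Lemma regular_or {A : finType} (L1 L2 : seq A -> Prop) :
  regular L1 -> regular L2 -> regular (fun w => L1 w \/ L2 w).
Proof.
move=> [M1 H1] [M2 H2]; apply: regular_ext (regular_pair M1 M2 orb) => w.
by rewrite H1 H2; split=> /orP.
Qed.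

Lemma regular_and {A : finType} (L1 L2 : seq A -> Prop) :
  regular L1 -> regular L2 -> regular (fun w => L1 w /\ L2 w).
Proof.
move=> [M1 H1] [M2 H2]; apply: regular_ext (regular_pair M1 M2 andb) => w.
by rewrite H1 H2; split=> /andP.
Qed.

Lemma regular_bigcup {A : finType} (I : finType) (L : I -> seq A -> Prop) :
  (forall i, regular (L i)) -> regular (fun w => exists i, L i w).
Proof.
move=> RL; suff: regular (fun w => exists2 i, i \in enum I & L i w).
  by apply: regular_ext => w; split=> [[i _ Li]|[i Li]]; exists i; rewrite ?mem_enum.
elim: (enum I) => [|i r IH].
  by apply: regular_ext regular_empty => w; split=> // -[].
apply: regular_ext (regular_or (RL i) IH) => w; split.
  case=> [Li|[j jr Lj]]; first by exists i; rewrite ?mem_head.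
  by exists j; rewrite ?in_cons ?jr ?orbT.
by case=> j; rewrite in_cons => /orP[/eqP->|jr Lj]; [left | right; exists j].
Qed.

Lemma regular_nfa {A : finType} (N : nfa A) : regular (nfa_accepts N).
Proof.
pose step (X : {set nstate N}) a :=
  set_of (fun q' => exists2 q, q \in X & ntrans q a q').
pose M := @Dfa A {set nstate N} (set_of (@ninit A N))
  (fun X => [exists q in X, q \in set_of (@nfinal A N)]) step.
have run w X q : q \in foldl step X w <-> exists2 q0, q0 \in X & nreach q0 w q.
  elim: w X => [|a w IH] X /=; first by split=> [|[q0 ? <-]]; first exists q.
  rewrite IH; split=> [[q1 /in_set_of[q0 q0X tq0] rq1]|[q0 q0X [q1 tq0 rq1]]].
    by exists q0 => //; exists q1.
  by exists q1 => //; apply/in_set_of; exists q0.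
exists M => w; rewrite /dfa_accepts /=; split.
  move=> [q0 [q [iq0 rq fq]]]; apply/existsP; exists q; apply/andP; split.
    by apply/run; exists q0 => //; apply/in_set_of.
  exact/in_set_of.
by case/existsP=> q /andP[/run[q0 /in_set_of iq0 rq] /in_set_of fq]; exists q0, q.
Qed.

Lemma regular_map {A : finType} (B : finType) (h : A -> B) (L : seq A -> Prop) :
  regular L -> regular (fun u => exists2 v, L v & u = map h v).
Proof.
move=> [M HM].
pose N := @Nfa B (dstate M) (eq^~ (dstart M)) (@dfinal A M)
  (fun q b q' => exists2 a, h a = b & dtrans q a = q').
have reach u q q' : nreach (N := N) q u q' <->
    exists2 v, u = map h v & foldl (@dtrans A M) q v = q'.
  elim: u q q' => [|b u IH] q q' /=.
    by split=> [<-|[[|] //= _ <-]]; first exists [::].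
  split=> [[q1 [a hab <-] /IH[v -> <-]]|[[//|a v] [-> eu] <-]].
    by exists (a :: v); rewrite //= hab.
  by exists (dtrans q a); [exists a | apply/IH; exists v].
apply: regular_ext (regular_nfa N) => u; split.
  move=> [q0 [q [-> /reach[v -> <-] fq]]]; exists v => //.
  exact/HM.
move=> [v /HM Lv ->]; exists (dstart M), (foldl (@dtrans A M) (dstart M) v).
by split=> //; apply/reach; exists v.
Qed.

Lemma regular_quot_pow {A : finType} (c : A) (L : seq A -> Prop) :
  regular L -> regular (fun w => exists n, L (nseq n c ++ w)).
Proof.
move=> [M HM].
pose N := @Nfa A (dstate M)
  (fun q => exists n, foldl (@dtrans A M) (dstart M) (nseq n c) = q)
  (@dfinal A M) (fun q a q' => dtrans q a = q').
have reach w q q' : nreach (N := N) q w q' <-> foldl (@dtrans A M) q w = q'.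
  elim: w q q' => [|a w IH] q q' //=.
  by split=> [[_ <- /IH]|<-] //; exists (dtrans q a); last exact/IH.
apply: regular_ext (regular_nfa N) => w; split.
  move=> [_ [q [[n <-] /reach<- fq]]]; exists n.
  by apply/HM; rewrite /dfa_accepts foldl_cat.
move=> [n /HM]; rewrite /dfa_accepts foldl_cat => fq.
set q0 := foldl _ _ (nseq n c) in fq.
by exists q0, (foldl (@dtrans A M) q0 w); split=> //; [exists n | exact/reach].
Qed.

Definition strip (B : eqType) (c : B) (v : seq B) : seq B :=
  drop (find (predC1 c) v) v.

Definition headok (B : eqType) (c : B) (w : seq B) : bool :=
  if w is a :: _ then a != c else true.

Lemma strip_iff (B : eqType) (c : B) (w v : seq B) :
  w = strip c v <-> headok c w /\ exists n, v = nseq n c ++ w.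
Proof.
have strip_nseq n u : headok c u -> strip c (nseq n c ++ u) = u.
  rewrite /strip; elim: n => [|n IH] /= hu; last by rewrite eqxx /= IH.
  by case: u hu => [|a u] //= ->; rewrite drop0.
split=> [->|[hw [n ->]]]; last by rewrite strip_nseq.
rewrite /strip; elim: v => [|a v [hv [n ev]]] /=; first by split=> //; exists 0.
case: (eqVneq a c) => [->|ne] /=; first by split=> //; exists n.+1; rewrite {1}ev.
by split=> //; exists 0.
Qed.

Lemma regular_headok {A : finType} (c : A) : regular (headok c).
Proof.
exists (@Dfa A (option bool) None (fun q => q != Some false)
  (fun q a => if q is None then Some (a != c) else q)).
have stay b w :
    foldl (fun q a => if q is None then Some (a != c) else q) (Some b) w = Some b.
  by elim: w.
by case=> [|a w]; rewrite /dfa_accepts //= stay; case: (a != c).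
Qed.

Lemma regular_strip {A : finType} (c : A) (L : seq A -> Prop) :
  regular L -> regular (fun w => exists2 v, L v & w = strip c v).
Proof.
move=> RL; have := regular_and (regular_headok c) (regular_quot_pow c RL).
apply: regular_ext => w.
split=> [[hw [n Lnw]]|[v Lv /strip_iff[hw [n ev]]]]; last first.
  by split=> //; exists n; rewrite -ev.
by exists (nseq n c ++ w) => //; apply/strip_iff; split=> //; exists n.
Qed.

Section Representation.
Variable S : ANS.
Local Notation A := (ans_alph S).
Local Notation column d := {ffun 'I_d -> option A}.

Definition blank (d : nat) : column d := [ffun _ => None].
Definition row (d : nat) (i : 'I_d) (W : seq (column d)) : seq (option A) :=
  map (fun col : column d => col i) W.
Definition pad (m : nat) (w : seq A) : seq (option A) :=
  nseq (m - size w) None ++ map Some w.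
Definition width (d : nat) (s : seq nat) : nat :=
  \max_(i < d) size (ans_rep S (nth 0 s i)).

Lemma size_rep_tuple d s : size (rep_tuple S d s) = width d s.
Proof. by rewrite size_mkseq. Qed.

Lemma width_ge d s (i : 'I_d) : size (ans_rep S (nth 0 s i)) <= width d s.
Proof. exact: (leq_bigmax (F := fun i : 'I_d => size (ans_rep S (nth 0 s i)))). Qed.

Lemma row_rep_tuple d s i :
  row i (rep_tuple S d s) = pad (width d s) (ans_rep S (nth 0 s i)).
Proof.
apply: (@eq_from_nth _ None).
  by rewrite size_map size_rep_tuple size_cat size_nseq size_map subnK ?width_ge.
move=> j; rewrite size_map size_rep_tuple => lt_j.
by rewrite (nth_map (blank d)) ?size_rep_tuple // nth_mkseq // ffunE.
Qed.

Lemma rows_inj d (W1 W2 : seq (column d)) :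
  size W1 = size W2 -> (forall i, row i W1 = row i W2) -> W1 = W2.
Proof.
move=> sz12 rows12; apply: (eq_from_nth (x0 := blank d)) => // j lt_j.
apply/ffunP => i; have := congr1 (nth None ^~ j) (rows12 i).
by rewrite /row !(nth_map (blank d)) // -sz12.
Qed.

Lemma row_blanks d (i : 'I_d) n W :
  row i (nseq n (blank d) ++ W) = nseq n None ++ row i W.
Proof. by rewrite /row map_cat map_nseq ffunE. Qed.

Lemma pad_add n m w : size w <= m -> pad (n + m) w = nseq n None ++ pad m w.
Proof. by move=> le_wm; rewrite /pad catA -nseqD addnBA. Qed.

Definition select (d e : nat) (f : 'I_d -> 'I_e) (t : seq nat) : seq nat :=
  [seq nth 0 t (f i) | i <- enum 'I_d].
Definition project (d e : nat) (f : 'I_d -> 'I_e) (col : column e) : column d :=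
  [ffun i => col (f i)].

Lemma nth_select d e (f : 'I_d -> 'I_e) t (i : 'I_d) :
  nth 0 (select f t) i = nth 0 t (f i).
Proof. by rewrite (nth_map i) ?size_enum_ord // nth_ord_enum. Qed.

Lemma size_select d e (f : 'I_d -> 'I_e) t : size (select f t) = d.
Proof. by rewrite size_map size_enum_ord. Qed.

Lemma row_project d e (f : 'I_d -> 'I_e) i W : row i (map (project f) W) = row (f i) W.
Proof. by rewrite /row -map_comp; apply: eq_map => col /=; rewrite ffunE. Qed.

(* The first letter of a representation is never blank: some component has
   maximal length, hence no padding. *)
Lemma headok_rep_tuple d s : headok (blank d) (rep_tuple S d s).
Proof.
case E: (rep_tuple S d s) => [//|col W] /=; apply/negP => /eqP col_blank.
have pos : 0 < width d s by rewrite -size_rep_tuple E.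
suff : width d s <= (width d s).-1 by lia.
apply/bigmax_leqP => i _.
have := congr1 (nth None ^~ 0) (row_rep_tuple s i).
rewrite E /= col_blank ffunE /pad nth_cat size_nseq subn_gt0.
case: ltnP => [lt_w _ | ge_w]; first by lia.
by rewrite sub0n; case: (ans_rep S _).
Qed.

Lemma rep_tuple_select d e (f : 'I_d -> 'I_e) t :
  rep_tuple S d (select f t) = strip (blank d) (map (project f) (rep_tuple S e t)).
Proof.
have le_width : width d (select f t) <= width e t.
  by apply/bigmax_leqP => i _; rewrite nth_select width_ge.
apply/strip_iff; split; first exact: headok_rep_tuple.
exists (width e t - width d (select f t)); apply: rows_inj.
  by rewrite size_cat size_nseq size_map !size_rep_tuple subnK.
move=> i; rewrite row_blanks row_project !row_rep_tuple nth_select -pad_add ?subnK //.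
by rewrite -nth_select width_ge.
Qed.

End Representation.

Section Recognizable.
Variable S : ANS.

Lemma recognizable_ext d (P Q : seq nat -> Prop) :
  (forall s, size s = d -> P s <-> Q s) -> recognizable S d P -> recognizable S d Q.
Proof.
move=> PQ; apply: regular_ext => w.
by split=> -[s [Ps sd ->]]; exists s; split=> //; apply/(PQ s sd).
Qed.

Lemma recognizable_empty d : recognizable S d (fun _ => False).
Proof. by apply: regular_ext regular_empty => w; split=> // -[s []]. Qed.

Lemma recognizable_bigcup d (I : finType) (P : I -> seq nat -> Prop) :
  (forall i, recognizable S d (P i)) -> recognizable S d (fun s => exists i, P i s).
Proof.
move=> RP; apply: regular_ext (regular_bigcup RP) => w; split.
  by move=> [i [s [Ps sd ->]]]; exists s; split=> //; exists i.
by move=> [s [[i Ps] sd ->]]; exists i, s.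
Qed.

Lemma recognizable_select d e (f : 'I_d -> 'I_e) (Z : seq nat -> Prop) :
  recognizable S e Z ->
  recognizable S d (fun s => exists t, [/\ Z t, size t = e & s = select f t]).
Proof.
move=> RZ; have := regular_strip (blank S d) (regular_map (project f) RZ).
apply: regular_ext => w.
split=> [[_ [_ [t [Zt te ->]] ->] ->]|[_ [[t [Zt te ->]] _ ->]]].
  by exists (select f t); rewrite size_select rep_tuple_select; split=> //; exists t.
rewrite rep_tuple_select; exists (map (project f) (rep_tuple S e t)) => //.
by exists (rep_tuple S e t) => //; exists t.
Qed.

Lemma recognizable_mask d e (m : seq bool) (Z : seq nat -> Prop) :
  size m = e -> recognizable S e Z ->
  recognizable S d (fun s => exists t, [/\ Z t, size t = e & s = mask m t]).
Proof.
move=> me RZ; have [cm|ncm] := eqVneq (count id m) d; last first.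
  apply: recognizable_ext (recognizable_empty d) => s sd; split=> // -[t [_ te es]].
  by move: ncm; rewrite -sd es size_mask ?te ?eqxx.
have size_r : size (mask m (enum 'I_e)) == d by rewrite size_mask ?size_enum_ord ?cm.
pose f := tnth (Tuple size_r).
apply: recognizable_ext (recognizable_select f RZ) => s _.
suff mask_select t : size t = e -> mask m t = select f t.
  by split=> -[t [Zt te ->]]; exists t; rewrite ?mask_select.
move=> te; rewrite /select (map_comp (nth 0 t \o val) (tnth (Tuple size_r))).
by rewrite map_tnth_enum /= map_comp !map_mask val_enum_ord -te -{1}(mkseq_nth 0 t).
Qed.

End Recognizable.

Definition nu_code (Z : (nat -> nat) -> Prop) (k : nat) (s : seq nat) : Prop :=
  exists y, [/\ Z y, sum_le y k & nu_rel y s].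

Lemma partial_sum_mono (y : nat -> nat) m n :
  m <= n -> \sum_(i < m) y i <= \sum_(i < n) y i.
Proof.
move=> le_mn; rewrite (big_ord_widen n y le_mn) big_mkcond.
by apply: leq_sum => i _; case: ifP.
Qed.

Lemma sum_le_mono (x y : nat -> nat) k :
  (forall i, x i <= y i) -> sum_le y k -> sum_le x k.
Proof. by move=> xy yk n; apply: leq_trans (yk n); apply: leq_sum. Qed.

Lemma sum_count_mem (s : seq nat) n :
  \sum_(i < n) count_mem (i : nat) s = count (fun v => v < n) s.
Proof.
elim: n => [|n IH]; first by rewrite big_ord0; elim: s.
rewrite big_ord_recr /= IH -count_predUI.
rewrite (@eq_count _ (predI _ _) xpred0) => [|v /=].
  by rewrite count_pred0 addn0; apply: eq_count => v /=; rewrite ltnS; case: ltngtP.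
by case: ltngtP.
Qed.

Lemma size_nu x s k : nu_rel x s -> sum_le x k -> size s <= k.
Proof.
move=> [_ count_s] xk; apply: leq_trans _ (xk (\max_(v <- s) v).+1).
rewrite (eq_bigr (fun i : 'I__ => count_mem (i : nat) s)) => [|i _]; last first.
  by rewrite count_s.
rewrite sum_count_mem; apply/eq_leq/esym/eqP; rewrite -all_count.
by apply/allP => v vs; rewrite ltnS; apply: (leq_bigmax_seq (F := id)).
Qed.

Lemma sum_le_count_mem (s : seq nat) k :
  size s <= k -> sum_le (fun j => count_mem j s) k.
Proof. by move=> sk n; rewrite sum_count_mem; apply: leq_trans (count_size _ _) sk. Qed.

Lemma eventually_zero (y : nat -> nat) k :
  sum_le y k -> exists N, forall j, N <= j -> y j = 0.
Proof.
move=> yk; apply: NNPP => no_bound.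
have unbounded c : exists n, c <= \sum_(i < n) y i.
  elim: c => [|c [n le_c]]; first by exists 0.
  have [j [le_nj yj]] : exists j, n <= j /\ y j <> 0.
    apply: NNPP => none; apply: no_bound; exists n => j le_nj.
    by apply: NNPP => yj; apply: none; exists j.
  exists j.+1; rewrite big_ord_recr /= -addn1.
  apply: leq_add; first exact: leq_trans le_c (partial_sum_mono y le_nj).
  by rewrite lt0n; apply/eqP.
by have [n] := unbounded k.+1; have := yk n; lia.
Qed.

Definition multiset_prefix (y : nat -> nat) (n : nat) : seq nat :=
  flatten [seq nseq (y i) i | i <- iota 0 n].

Lemma count_multiset_prefix y n j :
  count_mem j (multiset_prefix y n) = if j < n then y j else 0.
Proof.
rewrite /multiset_prefix; elim: n => [//|n IH].
rewrite -addn1 iotaD map_cat flatten_cat count_cat IH /= cats0 count_nseq addn1 ltnS.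
rewrite add0n /= eq_sym; case: ltngtP => [|_|->]; by rewrite ?mul0n ?addn0 ?mul1n.
Qed.

Lemma nu_exists (y : nat -> nat) k : sum_le y k -> exists t, nu_rel y t.
Proof.
move=> /eventually_zero[N yN]; exists (sort leq (multiset_prefix y N)); split.
  exact: (sort_sorted leq_total).
move=> j; rewrite (permP (permEl (perm_sort leq _))) count_multiset_prefix.
by case: ltnP => // /yN.
Qed.

Lemma nu_subseq x y s t :
  nu_rel x s -> nu_rel y t -> (forall i, x i <= y i) -> subseq s t.
Proof.
move=> [sorted_s count_s] [sorted_t count_t] xy.
have /count_subseqP[s' sub_s' perm_s'] : forall v, count_mem v s <= count_mem v t.
  by move=> v; rewrite count_s count_t.
suff -> : s = s' by [].
apply: (sorted_eq leq_trans anti_leq sorted_s _ perm_s').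
exact: (subseq_sorted leq_trans sub_s' sorted_t).
Qed.

Lemma hered_code_iff (Y : (nat -> nat) -> Prop) D k s :
  (forall y, Y y -> sum_le y D) -> size s <= k ->
  nu_code (hered_closure Y) k s <->
  exists (e : 'I_D.+1) (m : e.-tuple bool),
    exists t, [/\ nu_code Y D t, size t = e & s = mask m t].
Proof.
move=> YD sk; split.
  move=> [x [[y [Yy xy]] _ nu_s]].
  have [t nu_t] := nu_exists (YD y Yy).
  have tD : size t < D.+1 := size_nu nu_t (YD y Yy).
  have /subseqP[m mt ->] := nu_subseq nu_s nu_t xy.
  exists (Ordinal tD), (@Tuple _ _ m (introT eqP mt)), t.
  by split=> //; exists y; split=> //; apply: YD.
move=> [e [m [t [[y [Yy yD [sorted_t count_t]]] te es]]]]; subst s.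
exists (fun j => count_mem j (mask m t)); split.
- exists y; split=> // j; rewrite -count_t.
  exact: leq_count_subseq (mask_subseq m t).
- exact: sum_le_count_mem.
- by split=> //; apply: (subseq_sorted leq_trans (mask_subseq m t) sorted_t).
Qed.

(* Codes of dimension d > k have sum d > k and do not count; for d <= k the
   codes of tilde-Y are a finite union of masked codes of Y. *)
Theorem mainTheorem17 (S : ANS) (Y : (nat -> nat) -> Prop) :
  addable S -> subshift Y -> codable S Y -> codable S (hered_closure Y).
Proof.
move=> _ _ [codes_Y [D YD]]; split; last first.
  by exists D => x [y [Yy xy]]; apply: sum_le_mono xy (YD y Yy).
move=> k d; case: (leqP d k) => [dk|kd]; last first.
  apply: recognizable_ext (recognizable_empty S d) => s sd.
  split=> // -[x [_ xk nu_s]].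
  by have := size_nu nu_s xk; rewrite sd leqNgt kd.
apply: (@recognizable_ext _ _ (fun s => exists (e : 'I_D.+1) (m : e.-tuple bool),
    exists t, [/\ nu_code Y D t, size t = e & s = mask m t])).
  by move=> s sd; symmetry; apply: hered_code_iff; rewrite ?sd.
apply: recognizable_bigcup => e; apply: recognizable_bigcup => m.
exact: recognizable_mask (size_tuple m) (codes_Y D e).
Qed.
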